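(* Assume (A.3). Then there are finite constants $C_M,C_b,C_f>0$, independent of $h$, such that for all sufficiently small $h$: \[ |M(y^\star(0),y^\star(T))-M(\hat y_h(0),\hat y_h(T))|\le C_Mh^{\lambda\eta},\qquad \|b(\hat y_h(0),\hat y_h(T))\|_2^2\le C_bh^{2\lambda\eta}, \] and, for almost every $t\in[0,T]$, \[ \big\|\big(f_1(y^\star(t),u^\star(t),t)-f_1(\hat y_h(t),\hat u_h(t),t),\ f_2(y^\star(t),u^\star(t),t)-f_2(\hat y_h(t),\hat u_h(t),t)\big)\big\|_2^2\le C_fh^{2\lambda\eta}. \]
   Context: Let $T>0$. $\mathcal{X}$: pairs $(y,u)$, $y:[0,T]\to\mathbb{R}^{n_y}$ with $y\in L^\infty$, $\dot y\in L^2$, $u\in L^\infty([0,T];\mathbb{R}^{n_u})$; $\|(y,u)\|_{\mathcal{X}}=\|\dot y\|_{L^2}+\operatorname{ess\,sup}_t\|(y(t),u(t))\|_\infty$. Given $M,b$ on $\mathbb{R}^{n_y}\times\mathbb{R}^{n_y}$ (values in $\mathbb{R}$, $\mathbb{R}^{n_b}$), $f_1,f_2$ on $\mathbb{R}^{n_y}\times\mathbb{R}^{n_u}\times[0,T]$ (values in $\mathbb{R}^{n_y}$, $\mathbb{R}^{n_c}$), and bounds $y_L\le y_R$, $u_L\le u_R$, the optimal control problem minimizes $M(y(0),y(T))$ over $\mathcal{X}$ subject to $b(y(0),y(T))=0$, $\dot y=f_1(y,u,t)$, $f_2(y,u,t)=0$ a.e., and the bounds for all $t$; $(y^\star,u^\star)$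 is a local (hence feasible) minimizer. Mesh $0=t_1<\dots<t_{N+1}=T$, $h=\max_i(t_{i+1}-t_i)$, degree $p$; $\mathcal{X}_{h,p}$: $y_h$ continuous and polynomial of degree $\le p$ on each $[t_i,t_{i+1}]$, $u_h$ polynomial of degree $\le p-1$ on each $[t_i,t_{i+1}]$. $\mathcal{B}_{h,p}\subset\mathcal{X}_{h,p}$ is the set of pairs satisfying the bounds at the sampling points of the discretization. (Approximability) there are $h_0,\eta,C_\eta>0$ such that for each $h\le h_0$ there exists $(y_h,u_h)\in\mathcal{B}_{h,p}$ with $\|(y^\star,u^\star)-(y_h,u_h)\|_{\mathcal{X}}\le C_\eta h^\eta$; $(\hat y_h,\hat u_h)$ denotes a fixed such pair. (A.3): there are $\lambda\in(0,1]$, $C_\lambda>0$, $\epsilon>0$ with $|M(y^\star(0),y^\star(T))-M(a,a')|\le C_\lambda\|(y^\star(0)-a,y^\star(T)-a')\|_2^\lambda$ and $\|b(y^\star(0),y^\star(T))-b(a,a')\|_2\le C_\lambda\|(y^\star(0)-a,y^\star(T)-a')\|_2^\lambda$ whenever $\|(y^\star(0)-a,y^\star(T)-a')\|_2\le\epsilon$, and for each $t\in[0,T]$, $\|(f_1(y^\star(t),u^\star(t),t)-f_1(v,w,t),f_2(y^\star(t),u^\star(t),t)-f_2(v,w,t))\|_2\le C_\lambda\|(y^\star(t)-v,u^\star(t)-w)\|_2^\lambda$ whenever $\|(y^\star(t)-v,u^\star(t)-w)\|_2\le\epsilon$. *)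

From HB Require Import structures.
From mathcomp Require Import all_boot all_order all_algebra.
From mathcomp Require Import all_classical all_reals all_analysis.
Set Implicit Arguments. Unset Strict Implicit. Unset Printing Implicit Defensive.
Import Order.TTheory GRing.Theory Num.Theory numFieldNormedType.Exports.
Local Open Scope classical_set_scope.
Local Open Scope ring_scope.

Definition normInf {R : realType} {n : nat} (v : 'I_n -> R) : R :=
  \big[Num.max/0]_(i < n) `|v i|.
Definition norm2 {R : realType} {n : nat} (v : 'I_n -> R) : R :=
  Num.sqrt (\sum_(i < n) v i ^+ 2).
(* norms of a concatenated vector (v, w) in R^(n+m) *)
Definition normInf_pair {R : realType} {n m : nat}
  (v : 'I_n -> R) (w : 'I_m -> R) : R := Num.max (normInf v) (normInf w).
Definition norm2_pair {R : realType} {n m : nat}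
  (v : 'I_n -> R) (w : 'I_m -> R) : R := Num.sqrt (norm2 v ^+ 2 + norm2 w ^+ 2).
Definition vsub {R : realType} {n : nat} (v w : 'I_n -> R) : 'I_n -> R :=
  fun i => v i - w i.

(* essential supremum over D w.r.t. Lebesgue measure
   (the library's ess_sup, with the "a.e." restricted to D) *)
Definition ess_sup_on {R : realType} (D : set R) (f : R -> \bar R) : \bar R :=
  ereal_inf [set c | \forall t \ae (@lebesgue_measure R), D t -> (f t <= c)%E].

(* y is absolutely continuous on [0,T] with (a.e.) derivative yd, and
   yd is square integrable on [0,T] *)
Definition is_deriv {R : realType} {n : nat} (T : R)
  (y yd : R -> 'I_n -> R) : Prop :=
  (forall i, (@lebesgue_measure R).-integrable `[0%R, T]%classic (fun t => (yd t i)%:E)) /\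
  (forall t, 0 <= t <= T -> forall i,
     y t i = y 0 i + Rintegral (@lebesgue_measure R) `[0%R, t]%classic (fun s => yd s i)) /\
  (\int[@lebesgue_measure R]_(t in `[0%R, T]%classic) ((norm2 (yd t)) ^+ 2)%:E < +oo)%E.

Definition L2norm {R : realType} {n : nat} (T : R) (yd : R -> 'I_n -> R) : \bar R :=
  match (\int[@lebesgue_measure R]_(t in `[0%R, T]%classic) ((norm2 (yd t)) ^+ 2)%:E)%E with
  | r%:E => (Num.sqrt r)%:E
  | _ => +oo%E
  end.

Definition ess_bounded {R : realType} {n : nat} (T : R) (f : R -> 'I_n -> R) : Prop :=
  exists c : R, \forall t \ae (@lebesgue_measure R), `[0%R, T]%classic t -> normInf (f t) <= c.

Definition in_X {R : realType} {ny nu : nat} (T : R)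
  (y : R -> 'I_ny -> R) (u : R -> 'I_nu -> R) : Prop :=
  (exists yd, is_deriv T y yd) /\ ess_bounded T y /\
  (forall i, measurable_fun `[0%R, T]%classic (fun t => u t i)) /\ ess_bounded T u.

(* ||(dy,du)||_X computed with the (a.e. unique) derivative dyd of dy *)
Definition Xnorm_with {R : realType} {ny nu : nat} (T : R)
  (dyd dy : R -> 'I_ny -> R) (du : R -> 'I_nu -> R) : \bar R :=
  (L2norm T dyd + ess_sup_on `[0%R, T]%classic (fun t => (normInf_pair (dy t) (du t))%:E))%E.

Definition Xdist_le {R : realType} {ny nu : nat} (T : R)
  (y1 : R -> 'I_ny -> R) (u1 : R -> 'I_nu -> R)
  (y2 : R -> 'I_ny -> R) (u2 : R -> 'I_nu -> R) (c : R) : Prop :=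
  exists dyd, is_deriv T (fun t => vsub (y1 t) (y2 t)) dyd /\
    (Xnorm_with T dyd (fun t => vsub (y1 t) (y2 t)) (fun t => vsub (u1 t) (u2 t))
       <= c%:E)%E.
Definition Xdist_lt {R : realType} {ny nu : nat} (T : R)
  (y1 : R -> 'I_ny -> R) (u1 : R -> 'I_nu -> R)
  (y2 : R -> 'I_ny -> R) (u2 : R -> 'I_nu -> R) (c : R) : Prop :=
  exists dyd, is_deriv T (fun t => vsub (y1 t) (y2 t)) dyd /\
    (Xnorm_with T dyd (fun t => vsub (y1 t) (y2 t)) (fun t => vsub (u1 t) (u2 t))
       < c%:E)%E.

Definition feasible {R : realType} {ny nu nb nc : nat} (T : R)
  (b : ('I_ny -> R) -> ('I_ny -> R) -> 'I_nb -> R)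
  (f1 : ('I_ny -> R) -> ('I_nu -> R) -> R -> 'I_ny -> R)
  (f2 : ('I_ny -> R) -> ('I_nu -> R) -> R -> 'I_nc -> R)
  (yL yR : 'I_ny -> R) (uL uR : 'I_nu -> R)
  (y : R -> 'I_ny -> R) (u : R -> 'I_nu -> R) : Prop :=
  in_X T y u /\
  b (y 0) (y T) = (fun _ => 0) /\
  (exists yd, is_deriv T y yd /\
     \forall t \ae (@lebesgue_measure R), `[0%R, T]%classic t -> yd t = f1 (y t) (u t) t) /\
  (\forall t \ae (@lebesgue_measure R), `[0%R, T]%classic t -> f2 (y t) (u t) t = (fun _ => 0)) /\
  (forall t, 0 <= t <= T ->
     (forall k, yL k <= y t k <= yR k) /\ (forall k, uL k <= u t k <= uR k)).

Definition local_min {R : realType} {ny nu nb nc : nat} (T : R)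
  (M : ('I_ny -> R) -> ('I_ny -> R) -> R)
  (b : ('I_ny -> R) -> ('I_ny -> R) -> 'I_nb -> R)
  (f1 : ('I_ny -> R) -> ('I_nu -> R) -> R -> 'I_ny -> R)
  (f2 : ('I_ny -> R) -> ('I_nu -> R) -> R -> 'I_nc -> R)
  (yL yR : 'I_ny -> R) (uL uR : 'I_nu -> R)
  (ys : R -> 'I_ny -> R) (us : R -> 'I_nu -> R) : Prop :=
  feasible T b f1 f2 yL yR uL uR ys us /\
  exists delta : R, 0 < delta /\
    forall y u, feasible T b f1 f2 yL yR uL uR y u ->
      Xdist_lt T y u ys us delta -> M (ys 0) (ys T) <= M (y 0) (y T).

Definition is_mesh {R : realType} (T h : R) (N : nat) (tm : nat -> R) : Prop :=
  (0 < N)%N /\ tm 0%N = 0 /\ tm N = T /\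
  (forall i, (i < N)%N -> tm i < tm i.+1) /\
  h = \big[Num.max/0]_(i < N) (tm i.+1 - tm i).

(* X_{h,p}: y polynomial of degree <= p on each closed cell (hence continuous),
   u polynomial of degree <= p-1 on each open cell *)
Definition in_Xhp {R : realType} {ny nu : nat} (p N : nat) (tm : nat -> R)
  (y : R -> 'I_ny -> R) (u : R -> 'I_nu -> R) : Prop :=
  forall i, (i < N)%N ->
    (forall k, exists P : {poly R}, (size P <= p.+1)%N /\
       forall t, tm i <= t <= tm i.+1 -> y t k = P.[t]) /\
    (forall k, exists Q : {poly R}, (size Q <= p)%N /\
       forall t, tm i < t < tm i.+1 -> u t k = Q.[t]).

Definition in_Bhp {R : realType} {ny nu : nat} (p N : nat) (tm : nat -> R)
  (samp : seq R) (yL yR : 'I_ny -> R) (uL uR : 'I_nu -> R)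
  (y : R -> 'I_ny -> R) (u : R -> 'I_nu -> R) : Prop :=
  in_Xhp p N tm y u /\
  forall s, s \in samp ->
    (forall k, yL k <= y s k <= yR k) /\ (forall k, uL k <= u s k <= uR k).

Definition assumption_A3 {R : realType} {ny nu nb nc : nat} (T : R)
  (M : ('I_ny -> R) -> ('I_ny -> R) -> R)
  (b : ('I_ny -> R) -> ('I_ny -> R) -> 'I_nb -> R)
  (f1 : ('I_ny -> R) -> ('I_nu -> R) -> R -> 'I_ny -> R)
  (f2 : ('I_ny -> R) -> ('I_nu -> R) -> R -> 'I_nc -> R)
  (ys : R -> 'I_ny -> R) (us : R -> 'I_nu -> R) (lam Clam eps : R) : Prop :=
  0 < lam <= 1 /\ 0 < Clam /\ 0 < eps /\
  (forall a a' : 'I_ny -> R,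
     norm2_pair (vsub (ys 0) a) (vsub (ys T) a') <= eps ->
     `|M (ys 0) (ys T) - M a a'|
        <= Clam * norm2_pair (vsub (ys 0) a) (vsub (ys T) a') `^ lam /\
     norm2 (vsub (b (ys 0) (ys T)) (b a a'))
        <= Clam * norm2_pair (vsub (ys 0) a) (vsub (ys T) a') `^ lam) /\
  (forall t, 0 <= t <= T -> forall v w,
     norm2_pair (vsub (ys t) v) (vsub (us t) w) <= eps ->
     norm2_pair (vsub (f1 (ys t) (us t) t) (f1 v w t))
                (vsub (f2 (ys t) (us t) t) (f2 v w t))
       <= Clam * norm2_pair (vsub (ys t) v) (vsub (us t) w) `^ lam).

From HB Require Import structures.
From mathcomp Require Import all_boot all_order all_algebra.
From mathcomp Require Import all_classical all_reals all_analysis.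
Import Order.TTheory GRing.Theory Num.Theory numFieldNormedType.Exports.
From mathcomp Require Import lra.
Local Open Scope classical_set_scope.
Local Open Scope ring_scope.

(* The X-distance c = C_eta h^eta between (ys, us) and the approximant
   bounds the state/control discrepancy by (a multiple of) c almost everywhere on
   [0, T]; since the state error is continuous, the bound also holds at the
   endpoints t = 0 and t = T.  All norms on R^n being equivalent, (A.3) applies as
   soon as h is so small that these discrepancies are below eps, and turns a
   distance O(h^eta) into an error O(h^(lam eta)); squaring gives the b and f
   estimates, where b(ys(0), ys(T)) = 0 by feasibility. *)

(* Typeclass search does not find the almost-everywhere filter of the Lebesgue
   measure by itself. *)
#[local] Instance lebesgue_ae_filter {R : realType} :
  Filter (nbhs (almost_everywhere (@lebesgue_measure R))) :=
  ae_filter_ringOfSetsType _.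

Section Norms.
Context {R : realType}.

Lemma le_normInf {n} (v : 'I_n -> R) i : `|v i| <= normInf v.
Proof. exact: (le_bigmax _ (fun j => `|v j|)). Qed.

Lemma norm2_sqr_le {n} {v : 'I_n -> R} {a : R} :
  (forall i, `|v i| <= a) -> norm2 v ^+ 2 <= n%:R * a ^+ 2.
Proof.
move=> va; rewrite sqr_sqrtr ?sumr_ge0 // => [|i _]; last exact: sqr_ge0.
rewrite mulr_natl -[n in _ *+ n]card_ord -sumr_const; apply: ler_sum => i _.
by rewrite -real_normK ?num_real // lerXn2r ?nnegrE ?(le_trans _ (va i)).
Qed.

Lemma norm2_pair_le {n m} {v : 'I_n -> R} {w : 'I_m -> R} {a : R} : 0 <= a ->
  (forall i, `|v i| <= a) -> (forall j, `|w j| <= a) ->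
  norm2_pair v w <= (n + m).+1%:R * a.
Proof.
move=> a_ge0 va wa.
rewrite /norm2_pair -[X in _ <= X]ger0_norm ?mulr_ge0 // -sqrtr_sqr.
apply: ler_wsqrtr; apply: (le_trans (lerD (norm2_sqr_le va) (norm2_sqr_le wa))).
rewrite -mulrDl -natrD exprMn ler_wpM2r ?sqr_ge0 // -natrX ler_nat.
by rewrite expnS expn1; apply/ltnW/leq_pmulr.
Qed.

Lemma norm2_vsub0l {n} (w : 'I_n -> R) : norm2 (vsub (fun _ => 0) w) = norm2 w.
Proof. by congr Num.sqrt; apply: eq_bigr => i _; rewrite /vsub sub0r sqrrN. Qed.

End Norms.

Section AlmostEverywhere.
Context {R : realType}.
Notation mu := (@lebesgue_measure R).

Lemma ae_itv_exists {P : R -> Prop} {a b : R} : a < b ->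
  (\forall t \ae mu, P t) -> exists2 t, a <= t <= b & P t.
Proof.
move=> ab [N [mN N0 notPN]]; apply: contrapT => noP.
have : (mu `[a, b] <= mu N)%E.
  apply: le_measure; rewrite ?inE //= => t tab; apply: notPN => Pt.
  by apply: noP; exists t; first by move: tab; rewrite /= in_itv.
by rewrite N0 lebesgue_measure_itv /= lte_fin ab -EFinD lee_fin subr_le0 leNgt ab.
Qed.

Lemma continuous_within_le_ae (a b K : R) (f : R -> R) : a < b ->
  {within `[a, b], continuous f} ->
  (\forall t \ae mu, `[a, b]%classic t -> f t <= K) ->
  forall x, a <= x <= b -> f x <= K.
Proof.
move=> ab cf fK x xab; rewrite leNgt; apply/negP => Kfx.
have xab' : `[a, b]%classic x by rewrite /= in_itv.
have /subspace_continuousP/(_ x xab') fx := cf.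
have /(_ (within_filter _ _)) := cvgr_gt _ fx _ Kfx.
rewrite near_withinE => /nbhs_ballP[d /= d_gt0 Kf].
pose lo := Num.max a (x - d / 2); pose hi := Num.min b (x + d / 2).
have lohi : lo < hi.
  move: xab => /andP[ax xb].
  by rewrite /lo /hi lt_min !gt_max ab /=; apply/and3P; split; lra.
have [t /andP[lot thi]] := ae_itv_exists lohi fK.
have [a_t t_b] : a <= t /\ t <= b.
  by move: lot thi; rewrite /lo /hi ge_max le_min => /andP[? _] /andP[? _].
have xt : ball x d t.
  move: lot thi; rewrite /lo /hi ge_max le_min /ball /= => /andP[_ ?] /andP[_ ?].
  by rewrite ltr_norml; apply/andP; split; lra.
have Kft : K < f t by apply: (Kf _ xt); rewrite in_itv /= a_t t_b.
by rewrite /= in_itv /= a_t t_b leNgt Kft => /(_ isT).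
Qed.

Lemma is_deriv_continuous {n} {T : R} {y yd : R -> 'I_n -> R} : 0 <= T ->
  is_deriv T y yd -> forall i, {within `[0, T], continuous (fun t => y t i)}.
Proof.
move=> T_ge0 [int_yd [y_int _]] i.
apply: (@subspace_eq_continuous _ _ _
  (fun t => y 0 i + parameterized_integral mu 0 t (fun s => yd s i))).
  by move=> t; rewrite inE /= in_itv /= => tT; rewrite /from_subspace (y_int t tT).
move=> x; apply: cvgD; first exact: cvg_cst.
exact: (parameterized_integral_continuous T_ge0 (int_yd i)).
Qed.

Lemma ess_sup_on_lt_ae (D : set R) (f : R -> \bar R) (c : \bar R) :
  (ess_sup_on D f < c)%E -> \forall t \ae mu, D t -> (f t <= c)%E.
Proof.
case/ereal_inf_lt => e /= fe ec.
by apply: filterS fe => t fte Dt; exact: le_trans (fte Dt) (ltW ec).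
Qed.

Lemma L2norm_ge0 {n} (T : R) (yd : R -> 'I_n -> R) : (0 <= L2norm T yd)%E.
Proof.
by rewrite /L2norm; case: (\int[mu]_(_ in _) _)%E => // r; rewrite lee_fin sqrtr_ge0.
Qed.

Section XDistance.
Context {ny nu : nat} {T : R} {y1 y2 : R -> 'I_ny -> R} {u1 u2 : R -> 'I_nu -> R}.

(* The essential supremum is an infimum, which need not be attained: hence the
   slack c < c'. *)
Lemma Xdist_le_ae {c c' : R} : c < c' -> Xdist_le T y1 u1 y2 u2 c ->
  \forall t \ae mu, `[0, T]%classic t ->
    normInf_pair (vsub (y1 t) (y2 t)) (vsub (u1 t) (u2 t)) <= c'.
Proof.
move=> cc' [dyd [_ dist_c]].
have : (ess_sup_on `[0%R, T]%classic
    (fun t => (normInf_pair (vsub (y1 t) (y2 t)) (vsub (u1 t) (u2 t)))%:E) < c'%:E)%E.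
  apply: le_lt_trans (lee_paddl (L2norm_ge0 T dyd) (lexx _)) _.
  by apply: le_lt_trans dist_c _; rewrite lte_fin.
by move=> /ess_sup_on_lt_ae; apply: filterS => t + tT => /(_ tT); rewrite lee_fin.
Qed.

Lemma Xdist_le_state {c c' : R} : 0 < T -> c < c' -> Xdist_le T y1 u1 y2 u2 c ->
  forall t, 0 <= t <= T -> forall i, `|y1 t i - y2 t i| <= c'.
Proof.
move=> T_gt0 cc' dist t tT i; have [dyd [dyd_deriv _]] := dist.
apply: (@continuous_within_le_ae _ _ _ (fun s => `|y1 s i - y2 s i|) T_gt0 _ _ _ tT).
  move=> x; apply: (@continuous_comp _ _ _
    (from_subspace _ (fun s => y1 s i - y2 s i)) Num.norm).
    exact: (is_deriv_continuous (ltW T_gt0) dyd_deriv i x).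
  exact: (@norm_continuous _ R^o).
apply: filterS (Xdist_le_ae cc' dist) => s dist_s sT; apply: le_trans (dist_s sT).
by apply: le_trans (le_normInf (vsub (y1 s) (y2 s)) i) _; rewrite le_max lexx.
Qed.

Lemma Xdist_le_endpoints {c : R} : 0 < T -> 0 < c -> Xdist_le T y1 u1 y2 u2 c ->
  norm2_pair (vsub (y1 0) (y2 0)) (vsub (y1 T) (y2 T)) <= (ny + ny).+1%:R * 2 * c.
Proof.
move=> T_gt0 c_gt0 dist; have c_lt : c < 2 * c by rewrite ltr_pMl // ltr1n.
rewrite -mulrA; apply: norm2_pair_le => [|i|i]; first by rewrite mulr_ge0 // ltW.
all: by apply: (Xdist_le_state T_gt0 c_lt dist); rewrite lexx (ltW T_gt0).
Qed.

Lemma Xdist_le_ae_norm2 {c : R} : 0 < c -> Xdist_le T y1 u1 y2 u2 c ->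
  \forall t \ae mu, `[0, T]%classic t ->
    norm2_pair (vsub (y1 t) (y2 t)) (vsub (u1 t) (u2 t)) <= (ny + nu).+1%:R * 2 * c.
Proof.
move=> c_gt0 dist; have c_lt : c < 2 * c by rewrite ltr_pMl // ltr1n.
apply: filterS (Xdist_le_ae c_lt dist) => t dist_t tT.
rewrite -mulrA; apply: norm2_pair_le => [|i|j]; first by rewrite mulr_ge0 // ltW.
- apply: le_trans (le_normInf (vsub (y1 t) (y2 t)) i) _; apply: le_trans (dist_t tT).
  by rewrite le_max lexx.
- apply: le_trans (le_normInf (vsub (u1 t) (u2 t)) j) _; apply: le_trans (dist_t tT).
  by rewrite le_max lexx orbT.
Qed.

End XDistance.

End AlmostEverywhere.

Section Rates.
Context {R : realType}.

Lemma is_mesh_gt0 {T h : R} {N tm} : is_mesh T h N tm -> 0 < h.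
Proof.
case=> N_gt0 [_ [_ [tm_incr ->]]].
apply: lt_le_trans (le_bigmax _ (fun i : 'I_N => tm i.+1 - tm i) (Ordinal N_gt0)).
by rewrite subr_gt0 tm_incr.
Qed.

Lemma powR_threshold {eps D eta h : R} : 0 < eps -> 0 < D -> 0 < eta -> 0 <= h ->
  h <= (eps / D) `^ eta^-1 -> D * h `^ eta <= eps.
Proof.
move=> eps_gt0 D_gt0 eta_gt0 h_ge0 h_le.
have epsD_gt0 : 0 < eps / D by rewrite divr_gt0.
rewrite mulrC -ler_pdivlMr //.
rewrite -[X in _ <= X](powRr1 (ltW epsD_gt0)) -(mulVf (lt0r_neq0 eta_gt0)) powRrM.
by apply: (ge0_ler_powR (ltW eta_gt0)); rewrite ?nnegrE ?powR_ge0.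
Qed.

Lemma holder_rate {C D eps lam eta h x g : R} :
  0 <= C -> 0 < D -> 0 < eps -> 0 < lam -> 0 < eta -> 0 <= h ->
  h <= (eps / D) `^ eta^-1 -> 0 <= x -> x <= D * h `^ eta ->
  (x <= eps -> g <= C * x `^ lam) -> g <= C * D `^ lam * h `^ (lam * eta).
Proof.
move=> C_ge0 D_gt0 eps_gt0 lam_gt0 eta_gt0 h_ge0 h_le x_ge0 x_le holder.
have Dh_le := powR_threshold eps_gt0 D_gt0 eta_gt0 h_ge0 h_le.
apply: le_trans (holder (le_trans x_le Dh_le)) _.
rewrite -mulrA; apply: ler_wpM2l => //.
rewrite (mulrC lam) powRrM -powRM ?powR_ge0 ?(ltW D_gt0) //.
by apply: (ge0_ler_powR (ltW lam_gt0)); rewrite ?nnegrE ?mulr_ge0 ?powR_ge0 ?(ltW D_gt0).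
Qed.

Lemma sqr_powR_rate (C h r a : R) :
  0 <= a -> a <= C * h `^ r -> a ^+ 2 <= C ^+ 2 * h `^ (2 * r).
Proof.
move=> a_ge0 a_le; rewrite (mulrC 2) powRrM powR_mulrn ?powR_ge0 // -exprMn.
by rewrite lerXn2r ?nnegrE ?(le_trans a_ge0 a_le).
Qed.

End Rates.

Theorem mainTheorem13 (R : realType) (T : R) (ny nu nb nc : nat)
  (M : ('I_ny -> R) -> ('I_ny -> R) -> R)
  (b : ('I_ny -> R) -> ('I_ny -> R) -> 'I_nb -> R)
  (f1 : ('I_ny -> R) -> ('I_nu -> R) -> R -> 'I_ny -> R)
  (f2 : ('I_ny -> R) -> ('I_nu -> R) -> R -> 'I_nc -> R)
  (yL yR : 'I_ny -> R) (uL uR : 'I_nu -> R)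
  (ys : R -> 'I_ny -> R) (us : R -> 'I_nu -> R)
  (p : nat) (samp : nat -> (nat -> R) -> seq R)
  (h0 eta Ceta : R)
  (yh : nat -> (nat -> R) -> R -> 'I_ny -> R)
  (uh : nat -> (nat -> R) -> R -> 'I_nu -> R)
  (lam Clam eps : R) :
  0 < T -> (forall k, yL k <= yR k) -> (forall k, uL k <= uR k) -> (0 < p)%N ->
  local_min T M b f1 f2 yL yR uL uR ys us ->
  (* approximability, with (yh N tm, uh N tm) the fixed approximant on mesh tm *)
  0 < h0 -> 0 < eta -> 0 < Ceta ->
  (forall h N tm, is_mesh T h N tm -> h <= h0 ->
     in_Bhp p N tm (samp N tm) yL yR uL uR (yh N tm) (uh N tm) /\
     Xdist_le T ys us (yh N tm) (uh N tm) (Ceta * h `^ eta)) ->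
  (* (A.3) *)
  assumption_A3 T M b f1 f2 ys us lam Clam eps ->
  exists CM Cb Cf : R, 0 < CM /\ 0 < Cb /\ 0 < Cf /\
  exists h1 : R, 0 < h1 /\
    forall h N tm, is_mesh T h N tm -> h <= h1 ->
      `|M (ys 0) (ys T) - M (yh N tm 0) (yh N tm T)| <= CM * h `^ (lam * eta) /\
      norm2 (b (yh N tm 0) (yh N tm T)) ^+ 2 <= Cb * h `^ (2 * lam * eta) /\
      (\forall t \ae (@lebesgue_measure R), `[0%R, T]%classic t ->
         norm2_pair (vsub (f1 (ys t) (us t) t) (f1 (yh N tm t) (uh N tm t) t))
                    (vsub (f2 (ys t) (us t) t) (f2 (yh N tm t) (uh N tm t) t)) ^+ 2
           <= Cf * h `^ (2 * lam * eta)).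
Proof.
move=> T_gt0 _ _ _ [[_ [b_ys _]] _] h0_gt0 eta_gt0 Ceta_gt0 approx.
case=> /andP[lam_gt0 _] [Clam_gt0 [eps_gt0 [A3_bnd A3_dyn]]].
pose Dbnd := (ny + ny).+1%:R * 2 * Ceta; pose Ddyn := (ny + nu).+1%:R * 2 * Ceta.
have [Dbnd_gt0 Ddyn_gt0] : 0 < Dbnd /\ 0 < Ddyn by split; rewrite !mulr_gt0.
pose CM := Clam * Dbnd `^ lam; pose Cf := Clam * Ddyn `^ lam.
have [CM_gt0 Cf_gt0] : 0 < CM /\ 0 < Cf by split; rewrite mulr_gt0 ?powR_gt0.
exists CM, (CM ^+ 2), (Cf ^+ 2); do 3 (split; first by rewrite ?exprn_gt0).
exists (Num.min h0 (Num.min ((eps / Dbnd) `^ eta^-1) ((eps / Ddyn) `^ eta^-1))).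
split=> [|h N tm mesh]; first by rewrite !lt_min h0_gt0 !powR_gt0 ?divr_gt0.
rewrite !le_min => /and3P[h_h0 h_bnd h_dyn].
have h_gt0 := is_mesh_gt0 mesh.
have [_ close] := approx h N tm mesh h_h0.
have c_gt0 : 0 < Ceta * h `^ eta by rewrite mulr_gt0 ?powR_gt0.
have bnd_close := Xdist_le_endpoints T_gt0 c_gt0 close.
rewrite mulrA -/Dbnd in bnd_close.
have rate_bnd := holder_rate (ltW Clam_gt0) Dbnd_gt0 eps_gt0 lam_gt0 eta_gt0
  (ltW h_gt0) h_bnd (sqrtr_ge0 _) bnd_close.
split; [|split].
- by apply: rate_bnd => /A3_bnd[].
- rewrite -mulrA; apply: sqr_powR_rate (sqrtr_ge0 _) _.
  by apply: rate_bnd => /A3_bnd[_]; rewrite b_ys norm2_vsub0l.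
- apply: filterS (Xdist_le_ae_norm2 c_gt0 close) => t dyn_close tT.
  have tT' : 0 <= t <= T by move: tT; rewrite /= in_itv.
  rewrite -mulrA; apply: sqr_powR_rate (sqrtr_ge0 _) _.
  apply: (holder_rate (ltW Clam_gt0) Ddyn_gt0 eps_gt0 lam_gt0 eta_gt0 (ltW h_gt0)
    h_dyn (sqrtr_ge0 _) _ (A3_dyn t tT' _ _)).
  by rewrite -mulrA; apply: dyn_close.
Qed.
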